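(* Let $N\ge1$ and let $\mathbf U$ be an $N\times N$ unitary-like matrix with rows $\mathbf u^0,\dots,\mathbf u^{N-1}$; let $\mathbb A=\{\mathbf u^0,\dots,\mathbf u^{N-1}\}$ (a set of $N$ sequences of length $N$). Partition $\mathbb A$ arbitrarily into nonempty subsets $\mathbb A^{(0)},\dots,\mathbb A^{(P-1)}$, and index the elements of each subset arbitrarily as $\mathbb A^{(p)}=(\mathbf a^{(p)}_0,\dots,\mathbf a^{(p)}_{n_p-1})$ with $n_p=|\mathbb A^{(p)}|$. For each $p$, choose an arbitrary $n_p\times n_p$ unitary-like matrix $\mathbf U^{(p)}$ with rows $\mathbf u^{(p),0},\dots,\mathbf u^{(p),n_p-1}$. For $0\le p<P$ and $0\le m<n_p$ define the sequence $$\mathbf s^{(p,m)}=\mathbf u^{(p),m}\odot\mathbb A^{(p)}=\big(u^{(p),m}_0\mathbf a^{(p)}_0\ \ u^{(p),m}_1\mathbf a^{(p)}_1\ \cdots\ u^{(p),m}_{n_p-1}\mathbf a^{(p)}_{n_p-1}\big)$$ of length $n_pN$. Then the family of the $N$ sequences $\{\mathbf s^{(p,m)}: 0\le p<P,\ 0\le m<n_p\}$ is an optimal $(N,1,\mathbb L)$-$N$-CO-SF, where $\mathbb L$ is the set of distinct values among $\{n_pN\}_{p}$.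
   Context: All sequences are finite complex sequences. A sequence $\mathbf s=(s_0,\dots,s_{L-1})$ of length $L$ is identified with the function $s:\mathbb Z\to\mathbb C$ given by $s(n)=s_n$ for $0\le n<L$ and $s(n)=0$ otherwise. For sequences $\mathbf s,\mathbf s'$ of lengths $L,L'$ (possibly different), the aperiodic correlation is $R_{\mathbf s,\mathbf s'}(\tau)=\sum_{l=0}^{L-1}s(l)\,\overline{s'(l+\tau)}$ for $\tau\in\mathbb Z$. The energy of $\mathbf s$ is $E_{\mathbf s}=R_{\mathbf s,\mathbf s}(0)$. An $(M,1,\mathbb L)$-$N$-shift cross-orthogonal sequence family ($N$-CO-SF) is an indexed family $(\mathbf s^0,\dots,\mathbf s^{M-1})$ of complex sequences, where $\mathbf s^m$ has length $L^{(m)}$ divisible by $N$, and $\mathbb L$ is the set of distinct values among $L^{(0)},\dots,L^{(M-1)}$, such that for all $0\le m,m'<M$ and all $k\in\mathbb Z$, $R_{\mathbf s^m,\mathbf s^{m'}}(kN)=E_{\mathbf s^m}\,\delta(m-m')\,\delta(k)$, where $\delta$ is the Kronecker delta. An $(M,1,\mathbb L)$-$N$-CO-SF is called optimal if $M=N$. An $n\times n$ complex matrix $\mathbf U$ is unitary-like if $\mathbf U\mathbf U^H=\mathbf U^H\mathbf U=\alpha\mathbf I_n$ for some real $\alpha>0$. Connection operator: for a vector $\mathbf v=(v_0,\dots,v_{K'-1})$ and an indexed set $\mathbb A=(\mathbf a_0,\dots,\mathbf a_{M-1})$ of $M$ sequences of common length $L$, with $K=\mathrm{lcm}(M,K')$,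 $\mathbf v\odot\mathbb A$ is the length-$KL$ concatenation $\big(v_{[k]_{K'}}\mathbf a_{[k]_M}\big)_{k=0}^{K-1}$, where $[a]_b$ is the remainder of $a$ modulo $b$. *)

(* Complex numbers are modelled by an arbitrary
   numClosedFieldType C (e.g. algC), with conjugation Num.conj. *)
From HB Require Import structures.
From mathcomp Require Import all_boot all_order all_algebra.
Set Implicit Arguments. Unset Strict Implicit. Unset Printing Implicit Defensive.
Import Order.TTheory GRing.Theory Num.Theory.
Local Open Scope ring_scope.

Section Defs.
Variable C : numClosedFieldType.

Definition sfun (s : seq C) (n : int) : C :=
  match n with Posz k => nth 0 s k | Negz _ => 0 end.

Definition corr (s s' : seq C) (tau : int) : C :=
  \sum_(l < size s) sfun s l%:Z * Num.conj (sfun s' (l%:Z + tau)).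

Definition energy (s : seq C) : C := corr s s 0.

(* (M,1,L)-N-CO-SF for a family indexed by a finite type I (M = #|I|),
   with L the set (duplicate-free list) of distinct lengths. *)
Definition is_COSF (N : nat) (I : finType) (L : seq nat) (s : I -> seq C) : Prop :=
  [/\ forall i, (N %| size (s i))%N,
      uniq L /\ L =i [seq size (s i) | i <- enum I] &
      forall (i i' : I) (k : int),
        corr (s i) (s i') (k * N%:Z) =
        energy (s i) * (i == i')%:R * (k == 0)%:R].

Definition is_optimal_COSF (N : nat) (I : finType) (L : seq nat) (s : I -> seq C) : Prop :=
  is_COSF N L s /\ #|I| = N.

Definition ctr (n : nat) (U : 'M[C]_n) : 'M[C]_n := (map_mx Num.conj U)^T.

Definition unitary_like (n : nat) (U : 'M[C]_n) : Prop :=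
  exists alpha : C, [/\ alpha \is Num.real, 0 < alpha,
    U *m ctr U = alpha%:M & ctr U *m U = alpha%:M].

Definition rowseq (m n : nat) (U : 'M[C]_(m, n)) (i : 'I_m) : seq C :=
  [seq U i j | j <- enum 'I_n].

Definition connection (v : seq C) (A : seq (seq C)) : seq C :=
  flatten [seq [seq nth 0 v (k %% size v)%N * x | x <- nth [::] A (k %% size A)%N]
          | k <- iota 0 (lcmn (size A) (size v))].

End Defs.

From HB Require Import structures.
From mathcomp Require Import all_boot all_order all_algebra.
Import Order.TTheory GRing.Theory Num.Theory.
Local Open Scope ring_scope.

(* Each sequence s^(p,m) is the concatenation of the N-blocks u^(p),m_j * u^(idx p j).
   At a shift kN only whole blocks overlap, so the correlation of s^(p,m) with
   s^(p',m') is sum_j u^(p),m_j conj(u^(p'),m'_(j+k)) <u^(idx p j), u^(idx p' (j+k))>.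
   The rows of U are orthogonal and idx is injective on the whole family, so every
   term vanishes unless p = p' and k = 0; the remaining sum is alpha times
   <u^(p),m, u^(p),m'>, which vanishes for m <> m' since U^(p) is unitary-like. *)

Section Connection.
Local Set Implicit Arguments.
Local Unset Strict Implicit.

Lemma big_ord_blocks (R : Type) (idx : R) (op : Monoid.law idx) n N (F : nat -> R) :
  \big[op/idx]_(l < n * N) F l = \big[op/idx]_(j < n) \big[op/idx]_(r < N) F (j * N + r)%N.
Proof.
elim: n => [|n IHn]; first by rewrite mul0n !big_ord0.
by rewrite big_ord_recr /= -IHn mulSnr big_split_ord.
Qed.

Variable C : numClosedFieldType.
Implicit Types (s : seq C) (B : seq (seq C)).

Lemma size_flatten_uniform B N : all (fun b => size b == N) B ->
  size (flatten B) = (size B * N)%N.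
Proof.
by elim: B => //= b B IHB /andP[/eqP sizeb /IHB sizeB]; rewrite size_cat sizeb sizeB mulSn.
Qed.

Lemma nth_flatten_uniform B N j r : all (fun b => size b == N) B -> (r < N)%N ->
  nth 0 (flatten B) (j * N + r) = nth 0 (nth [::] B j) r.
Proof.
move=> + ltrN; elim: B j => [|b B IHB] j /=; first by rewrite !nth_nil.
case/andP=> /eqP sizeb /IHB {}IHB; case: j => [|j].
  by rewrite mul0n add0n nth_cat sizeb ltrN.
by rewrite nth_cat sizeb mulSn -addnA ltnNge leq_addr /= addKn IHB.
Qed.

Lemma sfun_flatten_enum n (F : 'I_n -> seq C) N (z : int) r :
  (forall j, size (F j) = N) -> (r < N)%N ->
  sfun (flatten [seq F j | j <- enum 'I_n]) (z * N%:Z + r%:Z) =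
  \sum_(o < n | z == o%:Z) nth 0 (F o) r.
Proof.
move=> sizeF ltrN; have sizeB : all (fun b => size b == N) [seq F j | j <- enum 'I_n].
  by apply/allP => b /mapP[j _ ->]; rewrite sizeF.
case: z => [t|t].
  rewrite -PoszM -PoszD /= nth_flatten_uniform //.
  have [ltt|get] := ltnP t n.
    rewrite (big_pred1 (Ordinal ltt)) => [|o]; last by rewrite eqz_nat eq_sym.
    rewrite -[t]/(nat_of_ord (Ordinal ltt)) (nth_map (Ordinal ltt)) ?size_enum_ord //.
    by rewrite nth_ord_enum.
  rewrite [nth [::] _ t]nth_default; last by rewrite size_map size_enum_ord.
  rewrite big_pred0 => [|o]; first by case: r ltrN.
  by rewrite eqz_nat; apply/negbTE; apply: contraTneq get => ->; rewrite -ltnNge.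
rewrite big_pred0 //; case E: (_ + _) => [l|] //.
suff : Negz t * N%:Z + r%:Z < 0 by rewrite E.
apply: (lt_le_trans (y := Negz t * N%:Z + N%:Z)); first by rewrite ltrD2l ltz_nat.
by rewrite -[X in _ + X]mul1r -mulrDl mulr_le0_ge0 // NegzE addrC subr_le0 lez_nat.
Qed.

Lemma corr_flatten_enum n n' (F : 'I_n -> seq C) (F' : 'I_n' -> seq C) N (k : int) :
  (forall j, size (F j) = N) -> (forall o, size (F' o) = N) ->
  corr (flatten [seq F j | j <- enum 'I_n]) (flatten [seq F' o | o <- enum 'I_n'])
       (k * N%:Z) =
  \sum_(j < n) \sum_(o < n' | j%:Z + k == o%:Z) corr (F j) (F' o) 0.
Proof.
move=> sizeF sizeF'; have sizeB : all (fun b => size b == N) [seq F j | j <- enum 'I_n].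
  by apply/allP => b /mapP[j _ ->]; rewrite sizeF.
rewrite /corr (size_flatten_uniform sizeB) size_map size_enum_ord.
rewrite (big_ord_blocks _ _ _ (fun l => sfun (flatten _) l%:Z *
                                 Num.conj (sfun (flatten _) (l%:Z + k * N%:Z)))).
apply: eq_bigr => j _; rewrite sizeF exchange_big; apply: eq_bigr => r _ /=.
rewrite nth_flatten_uniform // PoszD PoszM addrAC -mulrDl sfun_flatten_enum //.
rewrite (nth_map j) ?size_enum_ord // nth_ord_enum rmorph_sum mulr_sumr.
by apply: eq_bigr => o _; rewrite addn0.
Qed.

Lemma sfun_scale (c : C) s (z : int) : sfun [seq c * x | x <- s] z = c * sfun s z.
Proof.
case: z => [t|t] /=; last by rewrite mulr0.
have [lts|ges] := ltnP t (size s); first by rewrite (nth_map 0).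
by rewrite !nth_default ?size_map // mulr0.
Qed.

Lemma corr_scale (c c' : C) s s' (tau : int) :
  corr [seq c * x | x <- s] [seq c' * x | x <- s'] tau = c * Num.conj c' * corr s s' tau.
Proof.
rewrite /corr size_map mulr_sumr; apply: eq_bigr => l _.
by rewrite !sfun_scale rmorphM mulrACA.
Qed.

Lemma size_rowseq M N (A : 'M[C]_(M, N)) i : size (rowseq A i) = N.
Proof. by rewrite size_map size_enum_ord. Qed.

Lemma nth_rowseq M N (A : 'M[C]_(M, N)) i (j : 'I_N) : nth 0 (rowseq A i) j = A i j.
Proof. by rewrite (nth_map j) ?size_enum_ord // nth_ord_enum. Qed.

Lemma corr_rowseq M N (A B : 'M[C]_(M, N)) i i' :
  corr (rowseq A i) (rowseq B i') 0 = \sum_r A i r * Num.conj (B i' r).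
Proof.
rewrite /corr size_rowseq; apply: eq_bigr => r _.
by rewrite addr0 [sfun _ _]/= [sfun _ _]/= !nth_rowseq.
Qed.

Lemma unitary_like_rows n (W : 'M[C]_n) : unitary_like W ->
  exists a : C, forall i j, \sum_r W i r * Num.conj (W j r) = a * (i == j)%:R.
Proof.
case=> a [_ _ WWH _]; exists a => i j.
have := congr1 (fun A : 'M[C]_n => A i j) WWH; rewrite !mxE mulr_natr => <-.
by apply: eq_bigr => r _; rewrite /ctr !mxE.
Qed.

Lemma connection_rowseq n M N (W : 'M[C]_n) (m : 'I_n) (U : 'M[C]_(M, N))
    (f : 'I_n -> 'I_M) :
  connection (rowseq W m) [seq rowseq U (f j) | j <- enum 'I_n] =
  flatten [seq [seq W m j * x | x <- rowseq U (f j)] | j <- enum 'I_n].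
Proof.
rewrite /connection size_rowseq size_map -cardE card_ord (lcmn_idPl (dvdnn n)).
rewrite -val_enum_ord -map_comp; congr flatten; apply: eq_map => j /=.
by rewrite modn_small // nth_rowseq (nth_map j) ?size_enum_ord // nth_ord_enum.
Qed.

Section RowConnection.
Variables (M N : nat) (U : 'M[C]_(M, N)).

Lemma size_connection_rowseq n (W : 'M[C]_n) m f :
  size (connection (rowseq W m) [seq rowseq U (f j) | j <- enum 'I_n]) = (n * N)%N.
Proof.
rewrite connection_rowseq (size_flatten_uniform (N := N)).
  by rewrite size_map size_enum_ord.
by apply/allP => b /mapP[j _ ->]; rewrite size_map size_rowseq.
Qed.

Lemma corr_connection_rowseq n n' (W : 'M[C]_n) (W' : 'M[C]_n') m m'
    (f : 'I_n -> 'I_M) (f' : 'I_n' -> 'I_M) (k : int) :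
  corr (connection (rowseq W m) [seq rowseq U (f j) | j <- enum 'I_n])
       (connection (rowseq W' m') [seq rowseq U (f' o) | o <- enum 'I_n'])
       (k * N%:Z) =
  \sum_(j < n) \sum_(o < n' | j%:Z + k == o%:Z)
     W m j * Num.conj (W' m' o) * \sum_r U (f j) r * Num.conj (U (f' o) r).
Proof.
rewrite !connection_rowseq (corr_flatten_enum (N := N)); last 2 first.
- by move=> j; rewrite size_map size_rowseq.
- by move=> o; rewrite size_map size_rowseq.
apply: eq_bigr => j _; apply: eq_bigr => o _.
by rewrite corr_scale corr_rowseq.
Qed.
End RowConnection.
End Connection.

Section Family.
Variables (C : numClosedFieldType) (N P : nat) (U : 'M[C]_N) (n : 'I_P -> nat).
Variables (idx : forall p : 'I_P, 'I_(n p) -> 'I_N) (Up : forall p : 'I_P, 'M[C]_(n p)).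
Hypothesis idx_inj : injective (fun x : {p : 'I_P & 'I_(n p)} => idx (tag x) (tagged x)).
Hypothesis unitaryU : unitary_like U.
Hypothesis unitaryUp : forall p, unitary_like (Up p).
Local Set Implicit Arguments.
Local Unset Strict Implicit.

Lemma idx_eq_tag p p' (j : 'I_(n p)) (o : 'I_(n p')) :
  idx p j = idx p' o -> p = p' /\ val j = val o.
Proof.
pose I p := 'I_(n p); move/(idx_inj (Tagged I j) (Tagged I o)) => E.
split; first exact: (congr1 (@tag _ I) E).
exact: (congr1 (fun x : {p : _ & I p} => val (tagged x)) E).
Qed.

Lemma corr_family_offdiag (x y : {p : 'I_P & 'I_(n p)}) (k : int) :
  (x != y) || (k != 0) ->
  corr (connection (rowseq (Up (tag x)) (tagged x))
                   [seq rowseq U (idx (tag x) j) | j <- enum 'I_(n (tag x))])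
       (connection (rowseq (Up (tag y)) (tagged y))
                   [seq rowseq U (idx (tag y) o) | o <- enum 'I_(n (tag y))])
       (k * N%:Z) = 0.
Proof.
case: x y => p m [p' m'] /= neq; rewrite corr_connection_rowseq.
have [a orthU] := unitary_like_rows unitaryU.
have [/andP[/eqP epp /eqP ek] | off] := boolP ((p == p') && (k == 0)).
  subst p' k; have neq_m : m != m' by rewrite orbF eq_Tagged in neq.
  have [b orthUp] := unitary_like_rows (unitaryUp p).
  rewrite (eq_bigr (fun j => Up p m j * Num.conj (Up p m' j) * a)) => [|j _].
    by rewrite -mulr_suml orthUp (negbTE neq_m) mulr0 mul0r.
  rewrite (big_pred1 j) => [|o]; last by rewrite addr0 eqz_nat eq_sym.
  by rewrite orthU eqxx mulr1.
apply: big1 => j _; apply: big1 => o /eqP jko.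
rewrite orthU; case: eqP => [/idx_eq_tag[epp ejo] | _]; last by rewrite !mulr0.
have k0 : k = 0 by apply: (addrI j%:Z); rewrite addr0 jko ejo.
by rewrite epp k0 !eqxx in off.
Qed.
End Family.

Theorem theorem2 (C : numClosedFieldType) (N : nat) (U : 'M[C]_N)
  (P : nat) (n : 'I_P -> nat)
  (idx : forall p : 'I_P, 'I_(n p) -> 'I_N)
  (Up : forall p : 'I_P, 'M[C]_(n p)) :
  (0 < N)%N ->
  unitary_like U ->
  (forall p, 0 < n p)%N ->
  bijective (fun x : {p : 'I_P & 'I_(n p)} => idx (tag x) (tagged x)) ->
  (forall p, unitary_like (Up p)) ->
  is_optimal_COSF N (undup [seq (n p * N)%N | p <- enum 'I_P])
    (fun x : {p : 'I_P & 'I_(n p)} =>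
       connection (rowseq (Up (tag x)) (tagged x))
               [seq rowseq U (idx (tag x) k) | k <- enum 'I_(n (tag x))]).
Proof.
move=> _ unitaryU n_gt0 bij_idx unitaryUp.
have offdiag := corr_family_offdiag (bij_inj bij_idx) unitaryU unitaryUp.
split; last by rewrite (bij_eq_card bij_idx) card_ord.
split=> [x | | x y k]; first by rewrite size_connection_rowseq dvdn_mull.
  split=> [|l]; first exact: undup_uniq.
  rewrite mem_undup; apply/mapP/mapP => [[p _ ->] | [x _ ->]].
    exists (Tagged (fun p => 'I_(n p)) (Ordinal (n_gt0 p))).
      by rewrite mem_enum.
    by rewrite size_connection_rowseq.
  by exists (tag x); rewrite ?mem_enum ?size_connection_rowseq.
have [<- | neq_xy] := eqVneq x y; last by rewrite mulr0 mul0r offdiag ?neq_xy.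
have [-> | nz_k] := eqVneq k 0; first by rewrite mul0r !mulr1.
by rewrite mulr0 offdiag ?nz_k ?orbT.
Qed.
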